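(* Probabilistic circuits and diagonal positive unital circuits over a given partition circuit are isomorphic, in the sense that: (i) for every diagonal positive unital circuit there is a probabilistic circuit over the same partition circuit with $P_k(\mathbf{x}_k)=\operatorname{diagvec}(O_k(\mathbf{x}_k))$ for every unit $k$ and every assignment $\mathbf{x}_k$; and (ii) conversely, for every probabilistic circuit there is a diagonal positive unital circuit over the same partition circuit with $\operatorname{diagvec}(O_k(\mathbf{x}_k))=P_k(\mathbf{x}_k)$ for every unit $k$ and every $\mathbf{x}_k$. Here $\operatorname{diagvec}(A)$ is the vector of diagonal entries of $A$.
   Context: A partition circuit over discrete variables $\mathbf{x}=\{x_0,\dots,x_{N-1}\}$ is a rooted binary tree whose leaves are in bijection with the variables (leaf $k$ carries $x_k$ with finite value set $\Omega(X_k)$), each internal unit $k$ having two children $k_l,k_r$; $\mathbf{x}_k$ denotes an assignment to the variables at leaves below $k$. Probabilistic circuit: to each leaf $k$ real vectors $P_{x_k}$ with nonnegative entries and $\sum_{x_k}P_{x_k}=(1,\dots,1)^T$, $P_k(\mathbf{x}_k)=P_{x_k}$; to each internal unit $k$ a real nonnegative row-stochastic matrix $W_k$ (rows sum to 1), $P_k(\mathbf{x}_k)=W_k(P_{k_l}(\mathbf{x}_{k_l})\otimes P_{k_r}(\mathbf{x}_{k_r}))$, $\otimes$ Kronecker product. Diagonal positive unital circuit: to each leaf $k$ diagonal complex matrices $\Delta_{x_k}$ with $\sum_{x_k}\Delta_{x_k}\Delta_{x_k}^*=\mathbb{1}$, $O_k(\mathbf{x}_k)=\Delta_{x_k}\Delta_{x_k}^*$;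 to each internal unit $k$ with input size $n$ (size of $O_{k_l}\otimes O_{k_r}$) and output size $m$, diagonal $n\times n$ matrices $D_{kj}$ ($j=1,\dots,m$) with $\operatorname{Tr}[D_{kj}D_{kj}^*]=1$, and $O_k(\mathbf{x}_k)=\sum_{j=1}^mJ_jD_{kj}(O_{k_l}(\mathbf{x}_{k_l})\otimes O_{k_r}(\mathbf{x}_{k_r}))D_{kj}^*J_j^*$, where $J_j$ is the $m\times n$ matrix whose $j$-th row is all ones and other entries zero. *)

(* Kronecker product: tensmx (real_closed.mxtens), whose
   index convention (i,j) |-> i * n + j is the standard Kronecker one. *)
From HB Require Import structures.
From mathcomp Require Import all_boot all_order all_algebra.
From mathcomp Require Import complex mxtens.
Set Implicit Arguments.
Unset Strict Implicit.
Unset Printing Implicit Defensive.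
Import Order.TTheory GRing.Theory Num.Theory.
Local Open Scope ring_scope.

(* Architecture: a partition circuit (rooted binary tree whose leaves
   carry variables) together with the size (dimension) of every unit.
   Leaf v nv d : leaf carrying variable x_v, whose value set Omega(X_v)
                 is 'I_nv (nv values), output size d.     *)
Inductive ptree : Type :=
| Leaf (v : nat) (nv : nat) (d : nat)
| Node (d : nat) (l r : ptree).

Definition dim (t : ptree) : nat :=
  match t with Leaf _ _ d => d | Node d _ _ => d end.

Fixpoint leaf_vars (t : ptree) : seq nat :=
  match t with Leaf v _ _ => [:: v] | Node _ l r => leaf_vars l ++ leaf_vars r end.

Definition partition_circuit (N : nat) (t : ptree) : Prop :=
  perm_eq (leaf_vars t) (iota 0 N).

Fixpoint asg (t : ptree) : Type :=
  match t with Leaf _ nv _ => 'I_nv | Node _ l r => (asg l * asg r)%type end.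

Section PC.
Variable R : rcfType.

(* parameters: leaf k: the vectors P_{x_k}; internal k: the matrix W_k *)
Fixpoint PCparams (t : ptree) : Type :=
  match t with
  | Leaf _ nv d => 'I_nv -> 'cV[R]_d
  | Node d l r => ('M[R]_(d, dim l * dim r) * PCparams l * PCparams r)%type
  end.

Fixpoint PC_valid (t : ptree) : PCparams t -> Prop :=
  match t return PCparams t -> Prop with
  | Leaf _ nv d => fun P =>
      (forall x i, 0 <= P x i 0) /\ \sum_(x < nv) P x = const_mx 1
  | Node d l r => fun p =>
      let: (W, pl, pr) := p in
      [/\ (forall i j, 0 <= W i j),
          (forall i, \sum_j W i j = 1),
          PC_valid pl & PC_valid pr]
  end.

Fixpoint PC_eval (t : ptree) : PCparams t -> asg t -> 'cV[R]_(dim t) :=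
  match t return PCparams t -> asg t -> 'cV[R]_(dim t) with
  | Leaf _ nv d => fun P x => P x
  | Node d l r => fun p x =>
      let: (W, pl, pr) := p in
      W *m (PC_eval pl x.1 *t PC_eval pr x.2)
  end.
End PC.

Section DPU.
Variable R : rcfType.
Local Notation C := R[i].

Definition adjmx m n (A : 'M[C]_(m, n)) : 'M[C]_(n, m) :=
  (map_mx (@conjc R) A)^T.

Definition Jmx m n (j : 'I_m) : 'M[C]_(m, n) :=
  \matrix_(a < m, b < n) (if a == j then 1 else 0).

Definition diagvec n (A : 'M[C]_n) : 'cV[C]_n := \col_i A i i.

(* parameters: leaf k: diagonal Delta_{x_k}; internal k: diagonal D_{kj} *)
Fixpoint DPUparams (t : ptree) : Type :=
  match t with
  | Leaf _ nv d => 'I_nv -> 'M[C]_d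
  | Node d l r => (('I_d -> 'M[C]_(dim l * dim r)) * DPUparams l * DPUparams r)%type
  end.

Fixpoint DPU_valid (t : ptree) : DPUparams t -> Prop :=
  match t return DPUparams t -> Prop with
  | Leaf _ nv d => fun Dl =>
      (forall x, is_diag_mx (Dl x)) /\
      \sum_(x < nv) Dl x *m adjmx (Dl x) = 1%:M
  | Node d l r => fun p =>
      let: (D, pl, pr) := p in
      [/\ (forall j, is_diag_mx (D j)),
          (forall j, \tr (D j *m adjmx (D j)) = 1),
          DPU_valid pl & DPU_valid pr]
  end.

Fixpoint DPU_eval (t : ptree) : DPUparams t -> asg t -> 'M[C]_(dim t) :=
  match t return DPUparams t -> asg t -> 'M[C]_(dim t) with
  | Leaf _ nv d => fun Dl x => Dl x *m adjmx (Dl x)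
  | Node d l r => fun p x =>
      let: (D, pl, pr) := p in
      \sum_(j < d)
        Jmx (dim l * dim r) j *m D j *m (DPU_eval pl x.1 *t DPU_eval pr x.2)
          *m adjmx (D j) *m adjmx (Jmx (dim l * dim r) j)
  end.
End DPU.

Definition cvC (R : rcfType) n (v : 'cV[R]_n) : 'cV[R[i]]_n :=
  map_mx (fun r : R => (r%:C)%C) v.

Fixpoint circuits_agree (R : rcfType) (t : ptree) :
    PCparams R t -> DPUparams R t -> Prop :=
  match t return PCparams R t -> DPUparams R t -> Prop with
  | Leaf _ nv d => fun P Dl =>
      forall x : asg (Leaf _ nv d),
        cvC (PC_eval (t := Leaf _ nv d) P x) = diagvec (DPU_eval (t := Leaf _ nv d) Dl x)
  | Node d l r => fun p o =>
      (forall x : asg (Node d l r),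
          cvC (PC_eval (t := Node d l r) p x) = diagvec (DPU_eval (t := Node d l r) o x))
      /\ circuits_agree p.1.2 o.1.2 /\ circuits_agree p.2 o.2
  end.

(* A diagonal circuit sees its parameters only through the squared moduli of
   their diagonal entries: for diagonal D, D diag(v) D^* = diag(|D_aa|^2 v_a),
   and J_j M J_j^* concentrates the sum of the entries of M at position (j,j),
   so a node computes diag(W v) with W_ja = |D_j,aa|^2.  Hence, when the
   probabilistic parameters are these squared moduli, O_k(x_k) = diag(P_k(x_k))
   at every unit, and the normalisations match: sum_x Delta_x Delta_x^* = 1
   iff sum_x P_x = 1, and the trace of D_j D_j^* is 1 iff row j of W sums
   to 1.  Squared moduli turn a diagonal circuit into a probabilistic one,
   entrywise square roots go back. *)

From HB Require Import structures.
From mathcomp Require Import all_boot all_order all_algebra.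
From mathcomp Require Import complex mxtens.
Set Implicit Arguments.
Unset Strict Implicit.
Unset Printing Implicit Defensive.
Import Order.TTheory GRing.Theory Num.Theory.
Local Open Scope ring_scope.

Lemma tens_diag_mx (K : comPzRingType) m n (d : 'rV[K]_m) (e : 'rV[K]_n) :
  diag_mx d *t diag_mx e = diag_mx (d *t e).
Proof.
apply/matrixP=> i j.
case: (mxtens_indexP i) => i1 i2; case: (mxtens_indexP j) => j1 j2.
rewrite tensmxE !mxE (inj_eq (can_inj (@mxtens_indexK _ _))).
rewrite mxtens_indexK !ord1.
by rewrite mulrnAl mulrnAr -mulrnA mulnb xpair_eqE andbC.
Qed.

Lemma is_diag_mx_eq_diag (K : pzSemiRingType) n (A : 'M[K]_n) :
  is_diag_mx A -> A = diag_mx (\row_i A i i).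
Proof.
move/is_diag_mxP => Adiag; apply/matrixP=> i j; rewrite !mxE.
by case: (eqVneq i j) => [->|/Adiag->]; rewrite ?mulr1n ?mulr0n.
Qed.

Section DiagonalCircuits.
Variable R : rcfType.
Local Notation C := R[i].
Local Open Scope complex_scope.

Definition normc2 (z : C) : R := complex.Re z ^+ 2 + complex.Im z ^+ 2.

Lemma mulcJ_normc2 (z : C) : z * conjc z = (normc2 z)%:C.
Proof. by rewrite -sqr_normc -add_Re2_Im2. Qed.

Definition diagC n (v : 'cV[R]_n) : 'M[C]_n := diag_mx (cvC v)^T.

Lemma diagvec_diagC n (v : 'cV[R]_n) : diagvec (diagC v) = cvC v.
Proof. by apply/matrixP=> i j; rewrite !mxE eqxx mulr1n (ord1 j). Qed.

Lemma diagC_inj n : injective (@diagC n).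
Proof.
by move=> u v /(congr1 (@diagvec R n)); rewrite !diagvec_diagC => /map_mx_inj.
Qed.

Lemma diagC_sum (I : finType) n (v : I -> 'cV[R]_n) :
  diagC (\sum_x v x) = \sum_x diagC (v x).
Proof.
apply/matrixP=> a b; rewrite !summxE !mxE summxE rmorph_sum /= -sumrMnl.
by apply: eq_bigr => x _; rewrite !mxE.
Qed.

Lemma diagC1 n : diagC (const_mx 1 : 'cV_n) = 1%:M.
Proof.
by rewrite -diag_const_mx; congr diag_mx; apply/matrixP=> i j; rewrite !mxE.
Qed.

Lemma sum_diagC_eq1 (I : finType) n (v : I -> 'cV[R]_n) :
  \sum_x diagC (v x) = 1%:M <-> \sum_x v x = const_mx 1.
Proof. by rewrite -diagC_sum -diagC1; split=> [/diagC_inj|->]. Qed.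

Lemma tens_diagC m n (u : 'cV[R]_m) (v : 'cV[R]_n) :
  diagC u *t diagC v = diagC (u *t v).
Proof.
rewrite /diagC tens_diag_mx -trmx_tens; congr (diag_mx _^T).
by apply/matrixP=> i j; rewrite !mxE rmorphM.
Qed.

Definition normsq_diag n (D : 'M[C]_n) (v : 'cV[R]_n) : Prop :=
  is_diag_mx D /\ forall a, D a a * conjc (D a a) = (v a 0)%:C.

Lemma normsq_diag_ge0 n (D : 'M[C]_n) v a : normsq_diag D v -> 0 <= v a 0.
Proof. by case=> _ Dv; rewrite -ler0c -Dv mulcJ_ge0. Qed.

Lemma normsq_diag_conj n (D : 'M[C]_n) w v : normsq_diag D w ->
  D *m diagC v *m adjmx D = diagC (\col_a (w a 0 * v a 0)).
Proof.
case=> Ddiag Dw; rewrite [D]is_diag_mx_eq_diag //.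
rewrite /adjmx map_diag_mx tr_diag_mx /diagC.
rewrite !mulmx_diag; congr diag_mx; apply/matrixP=> i a.
by rewrite !mxE mulrAC Dw rmorphM.
Qed.

Lemma normsq_diag_mul_adj n (D : 'M[C]_n) v : normsq_diag D v ->
  D *m adjmx D = diagC v.
Proof.
move=> Dv; have := normsq_diag_conj (const_mx 1) Dv.
rewrite diagC1 mulmx1 => ->.
by congr diagC; apply/matrixP=> a j; rewrite !mxE mulr1 (ord1 j).
Qed.

Lemma normsq_diag_trace n (D : 'M[C]_n) v : normsq_diag D v ->
  \tr (D *m adjmx D) = (\sum_a v a 0)%:C.
Proof.
move/normsq_diag_mul_adj->; rewrite mxtrace_diag rmorph_sum.
by under eq_bigr do rewrite !mxE.
Qed.

Lemma normsq_row_trace m n (D : 'M[C]_n) (W : 'M[R]_(m, n)) j :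
  normsq_diag D (row j W)^T -> \tr (D *m adjmx D) = (\sum_a W j a)%:C.
Proof.
by move/normsq_diag_trace->; congr _%:C; apply: eq_bigr => a _; rewrite !mxE.
Qed.

Definition sqrt_diag n (v : 'cV[R]_n) : 'M[C]_n :=
  diag_mx (\row_a (Num.sqrt (v a 0))%:C).

Lemma normsq_sqrt_diag n (v : 'cV[R]_n) : (forall a, 0 <= v a 0) ->
  normsq_diag (sqrt_diag v) v.
Proof.
move=> v_ge0; split=> [|a]; first exact: diag_mx_is_diag.
by rewrite !mxE eqxx mulr1n conjc_real -rmorphM -expr2 sqr_sqrtr.
Qed.

Definition normsq_diagvec n (D : 'M[C]_n) : 'cV[R]_n := \col_a normc2 (D a a).

Lemma normsq_diag_diagvec n (D : 'M[C]_n) : is_diag_mx D ->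
  normsq_diag D (normsq_diagvec D).
Proof. by split=> // a; rewrite mxE mulcJ_normc2. Qed.

Lemma Jmx_conj_diag m n (j : 'I_m) (d : 'rV[C]_n) :
  Jmx R n j *m diag_mx d *m adjmx (Jmx R n j) = (\sum_b d 0 b) *: delta_mx j j.
Proof.
apply/matrixP=> i k; rewrite mul_mx_diag !mxE.
under eq_bigr do rewrite !mxE (fun_if conjc) conjc1 conjc0.
case: eqP => _; case: eqP => _ /=; rewrite ?mulr1n ?mulr0n ?mulr1 ?mulr0;
  under eq_bigr do rewrite ?mul1r ?mulr1 ?mul0r ?mulr0.
all: by rewrite ?big1_eq.
Qed.

Lemma sum_Jmx_conj m n (D : 'I_m -> 'M[C]_n) (W : 'M[R]_(m, n)) v :
  (forall j, normsq_diag (D j) (row j W)^T) ->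
  \sum_j Jmx R n j *m D j *m diagC v *m adjmx (D j) *m adjmx (Jmx R n j)
    = diagC (W *m v).
Proof.
move=> DW; rewrite [in RHS]/diagC diag_mx_sum_delta; apply: eq_bigr => j _.
rewrite -(mulmxA (Jmx R n j) (D j)) -(mulmxA (Jmx R n j)).
rewrite (normsq_diag_conj _ (DW j)) Jmx_conj_diag !mxE rmorph_sum.
by congr (_ *: _); apply: eq_bigr => b _; rewrite !mxE.
Qed.

Fixpoint normsq_params (t : ptree) : PCparams R t -> DPUparams R t -> Prop :=
  match t return PCparams R t -> DPUparams R t -> Prop with
  | Leaf _ _ _ => fun P Dl => forall x, normsq_diag (Dl x) (P x)
  | Node _ _ _ => fun p o =>
      let: (W, pl, pr) := p in let: (D, ol, or) := o in
      [/\ forall j, normsq_diag (D j) (row j W)^T,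
          normsq_params pl ol & normsq_params pr or]
  end.

Lemma normsq_params_eval t (p : PCparams R t) o : normsq_params p o ->
  forall x, DPU_eval o x = diagC (PC_eval p x).
Proof.
elim: t p o => [? ? ? | d l IHl r IHr] /=.
  by move=> P Dl PD x; rewrite (normsq_diag_mul_adj (PD x)).
move=> [[W pl] pr] [[D ol] or] [DW /IHl evl /IHr evr] [xl xr] /=.
by rewrite evl evr tens_diagC (sum_Jmx_conj _ DW).
Qed.

Lemma normsq_params_agree t (p : PCparams R t) o : normsq_params p o ->
  circuits_agree p o.
Proof.
elim: t p o => [? ? ? | d l IHl r IHr] p o po.
  by move=> x; rewrite (normsq_params_eval po) diagvec_diagC.
split; first by move=> x; rewrite (normsq_params_eval po) diagvec_diagC.
by case: p o po => [[W pl] pr] [[D ol] or] [_ /IHl ? /IHr ?].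
Qed.

Lemma normsq_params_PC_valid t (p : PCparams R t) o :
  normsq_params p o -> DPU_valid o -> PC_valid p.
Proof.
elim: t p o => [? ? ? | d l IHl r IHr] /=.
  move=> P Dl PD [_ sumD]; split=> [x i|]; first exact: normsq_diag_ge0 (PD x).
  apply/sum_diagC_eq1.
  by rewrite -(eq_bigr _ (fun x _ => normsq_diag_mul_adj (PD x))).
move=> [[W pl] pr] [[D ol] or] [DW /IHl vl /IHr vr] [_ trD /vl ? /vr ?].
split=> // [j a|j]; first by have := normsq_diag_ge0 a (DW j); rewrite !mxE.
by apply: complexI; rewrite rmorph1 -(trD j) (normsq_row_trace (DW j)).
Qed.

Lemma normsq_params_DPU_valid t (p : PCparams R t) o :
  normsq_params p o -> PC_valid p -> DPU_valid o.
Proof.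
elim: t p o => [? ? ? | d l IHl r IHr] /=.
  move=> P Dl PD [_ sumP]; split=> [x|]; first by case: (PD x).
  rewrite (eq_bigr _ (fun x _ => normsq_diag_mul_adj (PD x))).
  exact/sum_diagC_eq1.
move=> [[W pl] pr] [[D ol] or] [DW /IHl vl /IHr vr] [_ sumW /vl ? /vr ?].
split=> // j; first by case: (DW j).
by rewrite (normsq_row_trace (DW j)) sumW rmorph1.
Qed.

Fixpoint normsq_pc (t : ptree) : DPUparams R t -> PCparams R t :=
  match t return DPUparams R t -> PCparams R t with
  | Leaf _ _ _ => fun Dl x => normsq_diagvec (Dl x)
  | Node _ _ _ => fun o => let: (D, ol, or) := o in
      (\matrix_j (normsq_diagvec (D j))^T, normsq_pc ol, normsq_pc or)
  end.

Fixpoint sqrt_dpu (t : ptree) : PCparams R t -> DPUparams R t :=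
  match t return PCparams R t -> DPUparams R t with
  | Leaf _ _ _ => fun P x => sqrt_diag (P x)
  | Node _ _ _ => fun p => let: (W, pl, pr) := p in
      (fun j => sqrt_diag (row j W)^T, sqrt_dpu pl, sqrt_dpu pr)
  end.

Lemma normsq_params_normsq_pc t (o : DPUparams R t) :
  DPU_valid o -> normsq_params (normsq_pc o) o.
Proof.
elim: t o => [? ? ? | d l IHl r IHr] /=.
  by move=> Dl [Ddiag _] x; exact: normsq_diag_diagvec (Ddiag x).
move=> [[D ol] or] [Ddiag _ /IHl ? /IHr ?]; split=> // j.
by rewrite rowK trmxK; exact: normsq_diag_diagvec (Ddiag j).
Qed.

Lemma normsq_params_sqrt_dpu t (p : PCparams R t) :
  PC_valid p -> normsq_params p (sqrt_dpu p).
Proof.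
elim: t p => [? ? ? | d l IHl r IHr] /=.
  by move=> P [P_ge0 _] x; exact: normsq_sqrt_diag (P_ge0 x).
move=> [[W pl] pr] [W_ge0 _ /IHl ? /IHr ?]; split=> // j.
by apply: normsq_sqrt_diag => a; rewrite !mxE W_ge0.
Qed.

End DiagonalCircuits.

Theorem proposition10 (R : rcfType) (N : nat) (t : ptree)
    (ht : partition_circuit N t) :
  (forall o : DPUparams R t, DPU_valid o ->
     exists p : PCparams R t, PC_valid p /\ circuits_agree p o) /\
  (forall p : PCparams R t, PC_valid p ->
     exists o : DPUparams R t, DPU_valid o /\ circuits_agree p o).
Proof.
split=> [o ov | p pv].
- have po := normsq_params_normsq_pc ov.
  exists (normsq_pc o); split; first exact: normsq_params_PC_valid po ov.
  exact: normsq_params_agree.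
- have po := normsq_params_sqrt_dpu pv.
  exists (sqrt_dpu p); split; first exact: normsq_params_DPU_valid po pv.
  exact: normsq_params_agree.
Qed.
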